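(* Let $n$ be odd, $p\ge1$, $q=2^{p+1}$, and let $f:\mathbb{Z}_2^n\to\mathbb{Z}_q$ satisfy $f(x)\equiv 2^p a(x)+\sum_{j=0}^{p-1}2^ja_j(x)\pmod q$ for Boolean functions $a,a_0,\dots,a_{p-1}$ on $\mathbb{Z}_2^n$. For $i\in\{0,\dots,2^p-1\}$ let $g_i=a\oplus z_{i,0}a_0\oplus\cdots\oplus z_{i,p-1}a_{p-1}$ and for $u\in\mathbb{Z}_2^n$ let $W(u)=(W_{g_0}(u),\dots,W_{g_{2^p-1}}(u))$. Suppose every $g_i$ is semi-bent and that for every $u\in\mathbb{Z}_2^n$ there exist $r\in\{0,\dots,2^{p-1}-1\}$ and $\epsilon\in\{\pm1\}$ such that either $W(u)=(\epsilon\sqrt2\,H^{(r)}_{2^{p-1}},\mathbf{0}_{2^{p-1}})$ or $W(u)=(\mathbf{0}_{2^{p-1}},\epsilon\sqrt2\,H^{(r)}_{2^{p-1}})$ (concatenations of vectors of length $2^{p-1}$, $\mathbf{0}_{2^{p-1}}$ the all-zero vector). Then $f$ is generalized bent.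
   Context: For $i\in\{0,\dots,2^m-1\}$, $z_i=(z_{i,0},\dots,z_{i,m-1})\in\mathbb{Z}_2^m$ is the binary vector with $i=\sum_j z_{i,j}2^j$. $H_{2^m}$ is the Sylvester–Hadamard matrix with entries $(H_{2^m})_{k,i}=(-1)^{z_k\cdot z_i}$, and $H^{(r)}_{2^m}$ its $r$-th row. $W_g(u)=2^{-n/2}\sum_{x\in\mathbb{Z}_2^n}(-1)^{g(x)\oplus u\cdot x}$; for odd $n$, $g$ is semi-bent if $W_g(u)\in\{0,\pm\sqrt2\}$ for all $u$. With $\zeta=e^{2\pi\mathrm{i}/q}$, $\mathcal{H}_f(u)=2^{-n/2}\sum_{x}\zeta^{f(x)}(-1)^{u\cdot x}$, and $f$ is generalized bent if $|\mathcal{H}_f(u)|=1$ for all $u$. *)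

From HB Require Import structures.
From mathcomp Require Import all_boot all_order all_algebra all_field.
Set Implicit Arguments. Unset Strict Implicit. Unset Printing Implicit Defensive.
Import Order.TTheory GRing.Theory Num.Theory.
Local Open Scope ring_scope.

Definition vec (n : nat) := {ffun 'I_n -> bool}.

Definition dotb n (u x : vec n) : bool := \big[addb/false]_(i < n) (u i && x i).

Definition bit (i j : nat) : bool := odd (i %/ 2 ^ j).

Definition bitdot (m k i : nat) : bool :=
  \big[addb/false]_(j < m) (bit k j && bit i j).

Definition hadamard (m k i : nat) : algC := (-1) ^+ bitdot m k i.

Definition walsh n (g : vec n -> bool) (u : vec n) : algC :=
  (sqrtC (2 ^+ n))^-1 * \sum_(x : vec n) (-1) ^+ (g x (+) dotb u x).

Definition semi_bent n (g : vec n -> bool) : Prop :=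
  forall u, walsh g u = 0 \/ walsh g u = sqrtC 2 \/ walsh g u = - sqrtC 2.

(* zeta = e^{2 pi i / 2^(p+1)}: the principal 2^p-th root of -1
   (nthroot picks the root of minimal non-negative argument, for 2^p > 1). *)
Definition zeta (p : nat) : algC := (2 ^ p)%N.-root (-1).

Definition gwalsh n p (f : vec n -> nat) (u : vec n) : algC :=
  (sqrtC (2 ^+ n))^-1 * \sum_(x : vec n) zeta p ^+ f x * (-1) ^+ dotb u x.

Definition gbent n p (f : vec n -> nat) : Prop := forall u, `|gwalsh p f u| = 1.

Definition gcomp n p (a : vec n -> bool) (as_ : 'I_p -> vec n -> bool)
  (i : nat) (x : vec n) : bool :=
  a x (+) \big[addb/false]_(j < p) (bit i j && as_ j x).

From HB Require Import structures.
From mathcomp Require Import all_boot all_order all_algebra all_field.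
From mathcomp Require Import ring.
Import Order.TTheory GRing.Theory Num.Theory.
Local Open Scope ring_scope.
Set Implicit Arguments. Unset Strict Implicit.

(* Every bit t and every w satisfy 2 w^t = (1 + w) + (1 - w)(-1)^t.  Taking the
   product of these identities over the bits a_j(x) with w_j = zeta^(2^j) gives
   zeta^f(x) = 2^-p sum_i c_i (-1)^(g_i(x)) with c_i = prod_j (1 + w_j (-1)^(z_{i,j})),
   hence H_f(u) = 2^-p sum_i c_i W_{g_i}(u).  Under the hypothesis on W(u) only one
   half of the indices contributes, on which c_i = c'_i (1 +- zeta^(2^(p-1))), and the
   same product identity read backwards evaluates sum_i c'_i (-1)^(z_i . z_r) to
   2^(p-1) prod_j w_j^(z_{r,j}), of modulus 2^(p-1).  As (zeta^(2^(p-1)))^2 = -1, the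
   factor 1 +- zeta^(2^(p-1)) has modulus sqrt 2, so |H_f(u)| = 1. *)


Lemma bit_small k i : (i < 2 ^ k)%N -> bit i k = false.
Proof. by move=> hi; rewrite /bit divn_small. Qed.

Lemma bitDexp_top k i : (i < 2 ^ k)%N -> bit (i + 2 ^ k) k.
Proof. by move=> hi; rewrite /bit -{1}(mul1n (2 ^ k)%N) divnDMl ?expn_gt0 // divn_small. Qed.

Lemma bitDexp_low k i j : (j < k)%N -> bit (i + 2 ^ k) j = bit i j.
Proof.
move=> hj; rewrite /bit.
have -> : (2 ^ k = 2 ^ (k - j) * 2 ^ j)%N by rewrite -expnD subnK // ltnW.
by rewrite divnDMl ?expn_gt0 // oddD oddX subn_eq0 leqNgt hj addbF.
Qed.

Lemma big_ord_exp2S (V : nmodType) k (F : nat -> V) :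
  \sum_(i < 2 ^ k.+1) F i = \sum_(i < 2 ^ k) F i + \sum_(i < 2 ^ k) F (i + 2 ^ k)%N.
Proof.
rewrite -!(big_mkord xpredT) expnS mul2n -addnn.
rewrite (@big_cat_nat _ _ _ (2 ^ k)%N) ?leq_addr //=.
by congr (_ + _); rewrite -{1}(add0n (2 ^ k)%N) big_addn addnK big_mkord.
Qed.

Lemma sum_prod_bits (R : comPzSemiRingType) k (F : nat -> bool -> R) :
  \sum_(i < 2 ^ k) \prod_(j < k) F j (bit i j) = \prod_(j < k) (F j false + F j true).
Proof.
elim: k => [|k IH]; first by rewrite expn0 big_ord1 !big_ord0.
rewrite (big_ord_exp2S k (fun i => \prod_(j < k.+1) F j (bit i j))).
rewrite big_ord_recr /= mulrDr -IH !mulr_suml.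
congr (_ + _); apply: eq_bigr => i _; rewrite big_ord_recr /=.
  by rewrite bit_small.
rewrite bitDexp_top //; congr (_ * _); by apply: eq_bigr => j _; rewrite bitDexp_low.
Qed.

Lemma signr_big_addb (R : pzRingType) I (r : seq I) (P : pred I) (b : I -> bool) :
  (-1) ^+ (\big[addb/false]_(j <- r | P j) b j) = \prod_(j <- r | P j) ((-1) ^+ b j : R).
Proof. by apply: (big_morph (fun t : bool => (-1) ^+ t : R)) => // x y; rewrite signr_addb. Qed.

Lemma sum_prod_bits_sign (R : comPzRingType) k (w : nat -> R) (b : nat -> bool) :
  \sum_(i < 2 ^ k) \prod_(j < k) ((1 + w j * (-1) ^+ bit i j) * (-1) ^+ (bit i j && b j)) =
  2 ^+ k * \prod_(j < k) w j ^+ b j.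
Proof.
rewrite (sum_prod_bits k (fun j t => (1 + w j * (-1) ^+ t) * (-1) ^+ (t && b j))).
have -> : 2 ^+ k = \prod_(j < k) (2 : R) by rewrite prodr_const card_ord.
rewrite -big_split /=.
by apply: eq_bigr => j _; case: (b j); rewrite /= ?expr0 ?expr1; ring.
Qed.

Definition gwalsh_coef (z : algC) (k i : nat) : algC :=
  \prod_(j < k) (1 + z ^+ (2 ^ j) * (-1) ^+ bit i j).

Lemma gwalsh_coef_low z k i : (i < 2 ^ k)%N ->
  gwalsh_coef z k.+1 i = gwalsh_coef z k i * (1 + z ^+ (2 ^ k)).
Proof. by move=> hi; rewrite /gwalsh_coef big_ord_recr /= bit_small // mulr1. Qed.

Lemma gwalsh_coef_high z k i : (i < 2 ^ k)%N ->
  gwalsh_coef z k.+1 (i + 2 ^ k) = gwalsh_coef z k i * (1 - z ^+ (2 ^ k)).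
Proof.
move=> hi; rewrite /gwalsh_coef big_ord_recr /= bitDexp_top // mulrN1.
by congr (_ * _); apply: eq_bigr => j _; rewrite bitDexp_low.
Qed.

Lemma sum_gwalsh_coef_hadamard z k r :
  \sum_(i < 2 ^ k) gwalsh_coef z k i * hadamard k r i =
  2 ^+ k * \prod_(j < k) (z ^+ (2 ^ j)) ^+ bit r j.
Proof.
rewrite -(sum_prod_bits_sign k (fun j => z ^+ (2 ^ j))); apply: eq_bigr => i _.
rewrite /hadamard /bitdot signr_big_addb -big_split /=.
by apply: eq_bigr => j _; rewrite andbC.
Qed.

Lemma zeta_exp2 p : zeta p ^+ (2 ^ p) = -1.
Proof. by rewrite rootCK // expn_gt0. Qed.

Lemma zeta_exp2S p : zeta p ^+ (2 ^ p.+1) = 1.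
Proof. by rewrite expnS mulnC exprM zeta_exp2 sqrrN expr1n. Qed.

Section GWalshExpansion.

Variables (n p : nat) (F : vec n -> nat).
Variables (a : vec n -> bool) (as_ : 'I_p -> vec n -> bool).
Hypothesis hF : forall x,
  (F x = 2 ^ p * a x + \sum_(j < p) 2 ^ j * as_ j x %[mod 2 ^ p.+1])%N.

Lemma zeta_expr_bits x :
  zeta p ^+ F x = (-1) ^+ a x * \prod_(j < p) (zeta p ^+ (2 ^ j)) ^+ as_ j x.
Proof.
rewrite -(expr_mod _ (zeta_exp2S p)) hF (expr_mod _ (zeta_exp2S p)).
rewrite exprD exprM zeta_exp2; congr (_ * _).
rewrite (big_morph _ (exprD (zeta p)) (expr0 _)).
by apply: eq_bigr => j _; rewrite exprM.
Qed.

Lemma zeta_expr_gcomp_expansion x (d : bool) :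
  zeta p ^+ F x * (-1) ^+ d = (2 ^+ p)^-1 *
    \sum_(i < 2 ^ p) gwalsh_coef (zeta p) p i * (-1) ^+ (gcomp a as_ i x (+) d).
Proof.
(* [sum_prod_bits_sign] is indexed by nat, so extend j |-> a_j(x) by [false]. *)
pose b j := if insub j is Some j' then as_ j' x else false.
have asE (j : 'I_p) : as_ j x = b j by rewrite /b valK.
have gcompE i : gcomp a as_ i x = a x (+) \big[addb/false]_(j < p) (bit i j && b j).
  by congr (_ (+) _); apply: eq_bigr => j _; rewrite asE.
have two_neq0 : (2 : algC) ^+ p != 0 by rewrite expf_neq0 ?pnatr_eq0.
rewrite zeta_expr_bits (eq_bigr (fun j : 'I_p => (zeta p ^+ (2 ^ j)) ^+ b j)); last first.
  by move=> j _; rewrite asE.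
rewrite -(mulKf two_neq0 (\prod_(j < p) _)).
rewrite -(sum_prod_bits_sign _ (fun j => zeta p ^+ (2 ^ j))).
rewrite mulrCA -mulrA; congr (_ * _).
rewrite mulr_sumr mulr_suml; apply: eq_bigr => i _.
rewrite gcompE big_split /= !signr_addb signr_big_addb /gwalsh_coef.
ring.
Qed.

Lemma gwalsh_expansion u :
  gwalsh p F u =
  (2 ^+ p)^-1 * \sum_(i < 2 ^ p) gwalsh_coef (zeta p) p i * walsh (gcomp a as_ i) u.
Proof.
rewrite /gwalsh (eq_bigr _ (fun x _ => zeta_expr_gcomp_expansion x _)).
rewrite -mulr_sumr exchange_big /= mulrCA; congr (_ * _).
rewrite mulr_sumr; apply: eq_bigr => i _.
by rewrite /walsh -mulr_sumr mulrCA.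
Qed.

End GWalshExpansion.

Lemma normC_expr_eq1 (x : algC) m : (0 < m)%N -> x ^+ m = 1 -> `|x| = 1.
Proof.
move=> m_gt0 xm; apply/eqP; rewrite -(pexpr_eq1 m_gt0) ?normr_ge0 //.
by rewrite -normrX xm normr1.
Qed.

Lemma normC_1D_sqrtCm1 (y : algC) : y ^+ 2 = -1 -> `|1 + y| = sqrtC 2.
Proof.
move=> y2.
have ny : `|y| = 1.
  by apply: (@normC_expr_eq1 _ 4) => //; rewrite (exprM y 2 2) y2 sqrrN expr1n.
have yC : y^* = - y.
  have y_neq0 : y != 0 by rewrite -normr_gt0 ny.
  by apply: (mulfI y_neq0); rewrite -normCK ny expr1n mulrN -expr2 y2 opprK.
rewrite -[LHS]sqrCK ?normr_ge0 // normCK.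
have -> : (1 + y)^* = 1 - y by rewrite rmorphD rmorph1 -yC.
by congr sqrtC; transitivity (1 - y ^+ 2); [ring | rewrite y2; ring].
Qed.

Lemma norm_gwalsh_half_hadamard (z eps : algC) k r (W : nat -> algC) :
  z ^+ (2 ^ k.+1) = -1 -> `|eps| = 1 ->
  (forall i, (i < 2 ^ k.+1)%N ->
     W i = if (i < 2 ^ k)%N then eps * sqrtC 2 * hadamard k r i else 0) \/
  (forall i, (i < 2 ^ k.+1)%N ->
     W i = if (i < 2 ^ k)%N then 0 else eps * sqrtC 2 * hadamard k r (i - 2 ^ k)) ->
  `|(2 ^+ k.+1)^-1 * \sum_(i < 2 ^ k.+1) gwalsh_coef z k.+1 i * W i| = 1.
Proof.
move=> z2 eps1 hW.
have ltS i : (i < 2 ^ k)%N -> (i < 2 ^ k.+1)%N by move/leq_trans; apply; rewrite leq_exp2l.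
have ltDS i : (i < 2 ^ k)%N -> (i + 2 ^ k < 2 ^ k.+1)%N.
  by move=> hi; rewrite expnS mul2n -addnn ltn_add2r.
set P := \prod_(j < k) (z ^+ (2 ^ j)) ^+ bit r j.
have [y [y2 ->]] : exists y, y ^+ 2 = -1 /\
    \sum_(i < 2 ^ k.+1) gwalsh_coef z k.+1 i * W i = eps * sqrtC 2 * (1 + y) * (2 ^+ k * P).
  have w2 : (z ^+ (2 ^ k)) ^+ 2 = -1 by rewrite -exprM -expnSr.
  rewrite (big_ord_exp2S k (fun i => gwalsh_coef z k.+1 i * W i)).
  case: hW => hW; [exists (z ^+ (2 ^ k)) | exists (- z ^+ (2 ^ k))];
    rewrite ?sqrrN; split=> //; rewrite -sum_gwalsh_coef_hadamard mulr_sumr.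
  - rewrite [X in _ + X]big1 ?addr0 => [|i _]; last first.
      by rewrite hW ?ltDS // ifN ?mulr0 // -leqNgt leq_addl.
    by apply: eq_bigr => i _; rewrite hW ?ltS // ltn_ord gwalsh_coef_low //; ring.
  - rewrite [X in X + _]big1 ?add0r => [|i _]; last by rewrite hW ?ltS // ltn_ord mulr0.
    apply: eq_bigr => i _; rewrite hW ?ltDS // ifN ?addnK; last by rewrite -leqNgt leq_addl.
    by rewrite gwalsh_coef_high //; ring.
have z1 : `|z| = 1.
  apply: (@normC_expr_eq1 _ (2 ^ k.+2)); first by rewrite expn_gt0.
  by rewrite expnS mulnC exprM z2 sqrrN expr1n.
have P1 : `|P| = 1 by rewrite normr_prod big1 // => j _; rewrite !normrX z1 !expr1n.
have sqrt2_ge0 : 0 <= sqrtC 2 :> algC by rewrite sqrtC_ge0 ler0n.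
rewrite !normrM normfV !normrX eps1 P1 (normC_1D_sqrtCm1 y2).
rewrite ger0_norm // [`|sqrtC 2|]ger0_norm //.
by rewrite mul1r mulr1 -expr2 sqrtCK -exprS mulVf // expf_neq0 ?pnatr_eq0.
Qed.

Theorem theorem4 (n p : nat) (hn : odd n) (hp : (1 <= p)%N)
  (f : vec n -> 'Z_(2 ^ p.+1))
  (a : vec n -> bool) (as_ : 'I_p -> vec n -> bool)
  (hf : forall x, (val (f x) = 2 ^ p * a x + \sum_(j < p) 2 ^ j * as_ j x
                    %[mod 2 ^ p.+1])%N)
  (hsb : forall i : 'I_(2 ^ p), semi_bent (gcomp a as_ i))
  (hW : forall u : vec n, exists r : nat, exists eps : algC,
      (r < 2 ^ p.-1)%N /\ (eps = 1 \/ eps = -1) /\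
      ((forall i : 'I_(2 ^ p),
          walsh (gcomp a as_ i) u =
            if (i < 2 ^ p.-1)%N then eps * sqrtC 2 * hadamard p.-1 r i else 0)
       \/
       (forall i : 'I_(2 ^ p),
          walsh (gcomp a as_ i) u =
            if (i < 2 ^ p.-1)%N then 0
            else eps * sqrtC 2 * hadamard p.-1 r (i - 2 ^ p.-1)))) :
  gbent p (fun x => val (f x)).
Proof.
move=> u; rewrite (gwalsh_expansion hf).
have [r [eps [_ [eps_pm1 hWu]]]] := hW u.
case: p hp f as_ hf {hsb hW} hWu => [//|k] _ f as_ _ hWu.
apply: (norm_gwalsh_half_hadamard (eps := eps) (r := r)
          (W := fun i => walsh (gcomp a as_ i) u)).
- exact: zeta_exp2.
- by case: eps_pm1 => ->; rewrite ?normrN normr1.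
- by case: hWu => hWu; [left | right] => i hi; exact: (hWu (Ordinal hi)).
Qed.
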